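(* Let $m\ge n$, $1\le r\le n$, $\delta=r/n$, $\mu\in[0,1)$, $\tau\in\mathbb{Z}_{\ge1}$, $\eta>0$, and suppose Assumption (A3) holds. Then the momentum iterates $\bm m_t$ of PowerSGD+ with MSGD satisfy, for every $t\ge0$, $$\mathbb{E}\|\bm m_t\|_F^2\le\frac{92\tau^2G^2}{(1-\mu)^2\delta^2}.$$
   Context: Setting: $N$ nodes jointly minimize $f(\bm{X})=\frac1N\sum_{i=1}^N f_i(\bm{X})$ over $\bm{X}\in\mathbb{R}^{m\times n}$, where $f_i(\bm{X})=\mathbb{E}_{\xi^{(i)}\sim\mathcal{D}_i}[F(\bm{X};\xi^{(i)})]$; node $i$ queries stochastic gradients $\nabla F(\bm{X};\xi^{(i)})$, sampled independently across nodes and iterations. Assumption (A3): $\|\nabla f(\bm{X})\|_F^2\le\omega^2$ for all $\bm X$, and $\mathbb{E}\|\frac1N\sum_{i=1}^N\nabla F(\bm{X};\xi^{(i)})\|_F^2\le G^2:=\sigma^2+\omega^2$ for all $\bm X$, where $\sigma^2$ bounds the variance $\mathbb{E}\|\nabla F(\bm{X};\xi^{(i)})-\nabla f_i(\bm{X})\|_F^2$ for all $i$ and $\bm X$. $\mathrm{QR}(\bm A)$, for $\bm A\in\mathbb{R}^{m\times r}$, denotes the factor $\bm Q\in\mathbb{R}^{m\times r}$ with $\bm Q^\top\bm Q=I_r$ of an economic QR decomposition $\bm A=\bm Q\bm R$. PowerSGD+ with MSGD (step size $\eta$, momentum $\mu$, restart period $\tau$, rank $r$): initialize $\bm X_0$,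 $\bm Q_{-1}\in\mathbb{R}^{n\times r}$, $\bm m_{-1}=0$, $\bm e_0^{(i)}=0$. For $t=0,1,\dots$: each node computes $\bm g_t^{(i)}=\nabla F(\bm X_t;\xi_t^{(i)})$ and $\bm\Delta_t^{(i)}=\bm g_t^{(i)}+\bm e_t^{(i)}$; let $\bm\Delta_t=\frac1N\sum_i\bm\Delta_t^{(i)}$. If $t\not\equiv0\pmod\tau$: $\tilde{\bm P}_t=\mathrm{QR}\big(\frac1N\sum_i\bm\Delta_t^{(i)}\bm Q_{t-1}\big)$; if $t\equiv0\pmod\tau$: $\tilde{\bm P}_t$ is the matrix of the top-$r$ left singular vectors of $\bm\Delta_t$. In both cases $\bm Q_t=\frac1N\sum_i(\bm\Delta_t^{(i)})^\top\tilde{\bm P}_t$, $\widehat{\bm\Delta}_t^{(i)}=\tilde{\bm P}_t\tilde{\bm P}_t^\top\bm\Delta_t^{(i)}$, $\widehat{\bm\Delta}_t=\tilde{\bm P}_t\bm Q_t^\top$, $\bm e_{t+1}^{(i)}=\bm\Delta_t^{(i)}-\widehat{\bm\Delta}_t^{(i)}$, $\bm m_t=\mu\bm m_{t-1}+\widehat{\bm\Delta}_t$, $\bm X_{t+1}=\bm X_t-\eta\bm m_t$. *)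

From HB Require Import structures.
From mathcomp Require Import all_boot all_order all_algebra.
From mathcomp Require Import all_classical all_reals all_analysis.
Set Implicit Arguments. Unset Strict Implicit. Unset Printing Implicit Defensive.
Import Order.TTheory GRing.Theory Num.Theory.
Local Open Scope classical_set_scope.
Local Open Scope ring_scope.

Section PowerSGD.
Variable R : realType.

Definition frob2 (a b : nat) (A : 'M[R]_(a, b)) : R :=
  \sum_(i < a) \sum_(j < b) A i j ^+ 2.

Definition is_QR_factor (a c : nat) (A Q : 'M[R]_(a, c)) : Prop :=
  Q^T *m Q = 1%:M /\
  exists Rm : 'M[R]_c, (forall i j : 'I_c, (j < i)%N -> Rm i j = 0) /\ A = Q *m Rm.

(** P is the matrix of the top-r left singular vectors of A (a x b, b <= a):
    there is an SVD A = U S V^T with U, V orthogonal, S "diagonal" with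
    nonnegative nonincreasing singular values, and P = first r columns of U. *)
Definition is_top_left_sv (a b c : nat) (A : 'M[R]_(a, b)) (P : 'M[R]_(a, c)) : Prop :=
  exists (U : 'M[R]_a) (V : 'M[R]_b) (s : 'I_b -> R),
    U^T *m U = 1%:M /\ V^T *m V = 1%:M /\
    (forall j, 0 <= s j) /\
    (forall j k : 'I_b, (j <= k)%N -> s k <= s j) /\
    A = U *m (\matrix_(i < a, j < b) (if (i == j :> nat) then s j else 0)) *m V^T /\
    P = U *m (\matrix_(i < a, k < c) (i == k :> nat)%:R).

Definition rmx_meas (d' : measure_display) (T' : measurableType d') (a b : nat)
  (Y : T' -> 'M[R]_(a, b)) : Prop :=
  forall i j, measurable_fun setT (fun w => Y w i j).

(** Borel measurability of a matrix map, encoded as: it maps random matrices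
    (on any measurable space) to random matrices. *)
Definition mx_borel (a b c e : nat) (f : 'M[R]_(a, b) -> 'M[R]_(c, e)) : Prop :=
  forall (d' : measure_display) (T' : measurableType d') (Y : T' -> 'M[R]_(a, b)),
    rmx_meas Y -> rmx_meas (f \o Y).

(** Joint measurability of the stochastic-gradient oracle (X, xi) |-> gF X xi. *)
Definition oracle_meas (dX : measure_display) (Xi : measurableType dX) (a b : nat)
  (gF : 'M[R]_(a, b) -> Xi -> 'M[R]_(a, b)) : Prop :=
  forall (d' : measure_display) (T' : measurableType d') (Y : T' -> 'M[R]_(a, b))
    (Z : T' -> Xi),
    rmx_meas Y -> measurable_fun setT Z -> rmx_meas (fun w => gF (Y w) (Z w)).

Definition samples_indep (d : measure_display) (T : measurableType d)
  (P : probability T R) (dX : measure_display) (Xi : measurableType dX) (N : nat)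
  (xi : nat -> 'I_N -> T -> Xi) : Prop :=
  forall (s : seq (nat * 'I_N)) (A : nat -> 'I_N -> set Xi),
    uniq s -> (forall t i, measurable (A t i)) ->
    P (\bigcap_(k in [set` s]) (xi k.1 k.2 @^-1` A k.1 k.2)) =
    (\prod_(k <- s) P (xi k.1 k.2 @^-1` A k.1 k.2))%E.

(** PowerSGD+ with MSGD, run along a sample path smp : nat -> 'I_N -> Xi.
    State before iteration t: (X_t, Q_{t-1}, m_{t-1}, (e_t^(i))_i). *)
Section Algo.
Variables (m n r N : nat) (dX : measure_display) (Xi : measurableType dX).
Variables (gF : 'M[R]_(m, n) -> Xi -> 'M[R]_(m, n))
          (qr : 'M[R]_(m, r) -> 'M[R]_(m, r))
          (topr : 'M[R]_(m, n) -> 'M[R]_(m, r))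
          (eta mu : R) (tau : nat) (X0 : 'M[R]_(m, n)) (Qinit : 'M[R]_(n, r)).

Definition psgd_state := ('M[R]_(m, n) * 'M[R]_(n, r) * 'M[R]_(m, n) * ('I_N -> 'M[R]_(m, n)))%type.

Definition psgd_step (t : nat) (smp : nat -> 'I_N -> Xi) (st : psgd_state) : psgd_state :=
  let: (X, Qp, mp, e) := st in
  let Dl := fun i => gF X (smp t i) + e i in
  let Db := (N%:R)^-1 *: \sum_(i < N) Dl i in
  let Pt := if (t %% tau == 0)%N then topr Db
            else qr ((N%:R)^-1 *: \sum_(i < N) (Dl i *m Qp)) in
  let Qt := (N%:R)^-1 *: \sum_(i < N) ((Dl i)^T *m Pt) in
  let Dh := Pt *m Qt^T in
  let e' := fun i => Dl i - Pt *m Pt^T *m Dl i in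
  let mt := mu *: mp + Dh in
  (X - eta *: mt, Qt, mt, e').

Fixpoint psgd_run (t : nat) (smp : nat -> 'I_N -> Xi) : psgd_state :=
  match t with
  | 0%N => (X0, Qinit, 0, fun _ => 0)
  | t'.+1 => psgd_step t' smp (psgd_run t' smp)
  end.

(** The momentum iterate m_t (computed at iteration t). *)
Definition psgd_momentum (t : nat) (smp : nat -> 'I_N -> Xi) : 'M[R]_(m, n) :=
  (psgd_run t.+1 smp).1.2.

End Algo.
End PowerSGD.

From HB Require Import structures.
From mathcomp Require Import all_boot all_order all_algebra.
From mathcomp Require Import all_classical all_reals all_analysis.
From mathcomp Require Import ring lra measurable_realfun.
Import Order.TTheory GRing.Theory Num.Theory.
Local Open Scope classical_set_scope.
Local Open Scope ring_scope.
Set Implicit Arguments. Unset Strict Implicit. Unset Printing Implicit Defensive.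

(* Fix a sample path and write g_k, e_k, D_k, m_k for the Frobenius norms of the averaged
   stochastic gradient, the averaged error feedback, their sum Delta_k and the momentum.
   Projections onto orthonormal columns are contractions, so D_k <= g_k + e_k,
   e_(k+1) <= D_k and m_(k+1) <= mu m_k + D_k; at a restart the top-r left singular
   subspace carries at least a fraction delta = r/n of |Delta_k|^2, whence
   e_(k+1) <= (1 - delta/2) D_k.  Unrolling gives m_(t+1) <= sum_l c_l g_l with
   deterministic c_l >= 0 and sum_l c_l <= K := 2 tau / (delta (1 - mu)), so
   m_(t+1)^2 <= K sum_l c_l g_l^2 by Cauchy-Schwarz.  The iterate X_l depends only on the
   samples of earlier iterations, which are independent of the fresh samples xi_l, so
   E g_l^2 <= G^2 by (A3) and Fubini.  Hence E |m_t|^2 <= K^2 G^2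
   = 4 tau^2 G^2 / ((1 - mu)^2 delta^2). *)

(** * Frobenius norm *)
Section Frobenius.
Variable R : realType.

Lemma weighted_CauchySchwarz (I : finType) (c x y : I -> R) :
  (forall i, 0 <= c i) ->
  (\sum_i c i * (x i * y i)) ^+ 2 <= (\sum_i c i * x i ^+ 2) * (\sum_i c i * y i ^+ 2).
Proof.
move=> c_ge0.
have -> : (\sum_i c i * (x i * y i)) ^+ 2 =
    \sum_i \sum_j c i * c j * (x i * y i * (x j * y j)).
  rewrite expr2 mulr_suml; apply: eq_bigr => i _; rewrite mulr_sumr.
  by apply: eq_bigr => j _; ring.
have -> : (\sum_i c i * x i ^+ 2) * (\sum_i c i * y i ^+ 2) =
    \sum_i \sum_j c i * c j * (x i ^+ 2 * y j ^+ 2).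
  rewrite mulr_suml; apply: eq_bigr => i _; rewrite mulr_sumr.
  by apply: eq_bigr => j _; ring.
rewrite -(ler_pM2l (ltr0n R 2)) !mulr_natl !mulr2n.
rewrite [X in _ <= _ + X]exchange_big -!big_split /=.
apply: ler_sum => i _; rewrite -!big_split /=; apply: ler_sum => j _.
have := mulr_ge0 (c_ge0 i) (c_ge0 j); have := sqr_ge0 (x i * y j - x j * y i); nra.
Qed.

Definition frob_dot (a b : nat) (A B : 'M[R]_(a, b)) : R :=
  \sum_(i < a) \sum_(j < b) A i j * B i j.

Definition frob_norm (a b : nat) (A : 'M[R]_(a, b)) : R := Num.sqrt (frob2 A).

Section Shape.
Variables a b : nat.
Implicit Types A B : 'M[R]_(a, b).

Lemma frob_dot_tr A B : frob_dot A B = \tr (A^T *m B).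
Proof.
rewrite /frob_dot /mxtrace exchange_big; apply: eq_bigr => j _.
by rewrite mxE; apply: eq_bigr => i _; rewrite mxE.
Qed.

Lemma frob2_tr A : frob2 A = \tr (A^T *m A).
Proof.
rewrite -frob_dot_tr; apply: eq_bigr => i _; apply: eq_bigr => j _.
by rewrite expr2.
Qed.

Lemma frob2_trT A : frob2 A = \tr (A *m A^T).
Proof. by rewrite frob2_tr mxtrace_mulC. Qed.

Lemma frob2_ge0 A : 0 <= frob2 A.
Proof. by apply: sumr_ge0 => i _; apply: sumr_ge0 => j _; exact: sqr_ge0. Qed.

Lemma frob2D A B : frob2 (A + B) = frob2 A + 2 * frob_dot A B + frob2 B.
Proof.
rewrite /frob2 /frob_dot mulr_sumr -!big_split /=; apply: eq_bigr => i _.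
by rewrite mulr_sumr -!big_split /=; apply: eq_bigr => j _; rewrite mxE; ring.
Qed.

Lemma frob2Z (c : R) A : frob2 (c *: A) = c ^+ 2 * frob2 A.
Proof.
rewrite /frob2 mulr_sumr; apply: eq_bigr => i _; rewrite mulr_sumr.
by apply: eq_bigr => j _; rewrite mxE exprMn.
Qed.

Lemma frob_norm0 : frob_norm (0 : 'M[R]_(a, b)) = 0.
Proof. by rewrite /frob_norm -(scale0r (0 : 'M[R]_(a, b))) frob2Z expr0n mul0r sqrtr0. Qed.

Lemma frob_dot_sqr_le A B : frob_dot A B ^+ 2 <= frob2 A * frob2 B.
Proof.
have pairs (F : 'I_a -> 'I_b -> R) :
    \sum_i \sum_j F i j = \sum_(p : 'I_a * 'I_b) 1 * F p.1 p.2.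
  by rewrite pair_bigA; apply: eq_bigr => p _; rewrite mul1r.
by rewrite /frob_dot /frob2 !pairs; apply: weighted_CauchySchwarz.
Qed.

Lemma frob_norm_ge0 A : 0 <= frob_norm A.
Proof. exact: sqrtr_ge0. Qed.

Lemma sqr_frob_norm A : frob_norm A ^+ 2 = frob2 A.
Proof. by rewrite sqr_sqrtr // frob2_ge0. Qed.

Lemma frob_norm_le A (x : R) : 0 <= x -> frob2 A <= x ^+ 2 -> frob_norm A <= x.
Proof. by move=> x0 le; rewrite -(ger0_norm x0) -sqrtr_sqr /frob_norm ler_sqrt ?sqr_ge0. Qed.

Lemma frob_dot_le A B : frob_dot A B <= frob_norm A * frob_norm B.
Proof.
apply: le_trans (ler_norm _) _; rewrite -sqrtr_sqr -sqrtrM ?frob2_ge0 //.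
by rewrite ler_sqrt ?frob_dot_sqr_le // mulr_ge0 ?frob2_ge0.
Qed.

Lemma frob_normD A B : frob_norm (A + B) <= frob_norm A + frob_norm B.
Proof.
apply: frob_norm_le; first by rewrite addr_ge0 ?frob_norm_ge0.
rewrite frob2D -(sqr_frob_norm A) -(sqr_frob_norm B).
have := frob_dot_le A B; nra.
Qed.

Lemma frob_normZ (c : R) A : 0 <= c -> frob_norm (c *: A) = c * frob_norm A.
Proof. by move=> c0; rewrite /frob_norm frob2Z sqrtrM ?sqr_ge0 // sqrtr_sqr ger0_norm. Qed.

End Shape.

Lemma frob2_mul_orthl a c b (U : 'M[R]_(a, c)) (M : 'M[R]_(c, b)) :
  U^T *m U = 1%:M -> frob2 (U *m M) = frob2 M.
Proof. by move=> hU; rewrite !frob2_tr trmx_mul mulmxA -(mulmxA _ U^T) hU mulmx1. Qed.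

Lemma frob2_mul_orthr a c b (M : 'M[R]_(a, c)) (V : 'M[R]_(b, c)) :
  V^T *m V = 1%:M -> frob2 (M *m V^T) = frob2 M.
Proof.
by move=> hV; rewrite !frob2_trT trmx_mul trmxK mulmxA -(mulmxA M) hV mulmx1.
Qed.

Section Projection.
Variables a c b : nat.
Variables (P : 'M[R]_(a, c)) (D : 'M[R]_(a, b)).
Hypothesis P_orth : P^T *m P = 1%:M.

Lemma frob2_proj_split : frob2 D = frob2 (P *m P^T *m D) + frob2 (D - P *m P^T *m D).
Proof.
rewrite -{1}(subrK (P *m P^T *m D) D) addrC [LHS]frob2D frob_dot_tr.
have -> : (P *m P^T *m D)^T *m (D - P *m P^T *m D) = 0.
  by rewrite mulmxBr !trmx_mul trmxK !mulmxA -(mulmxA _ P^T P) P_orth mulmx1 subrr.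
by rewrite raddf0 mulr0 addr0.
Qed.

Lemma frob2_proj_le : frob2 (P *m P^T *m D) <= frob2 D.
Proof. by rewrite [leRHS]frob2_proj_split lerDl frob2_ge0. Qed.

Lemma frob2_proj_residual_le : frob2 (D - P *m P^T *m D) <= frob2 D.
Proof. by rewrite [leRHS]frob2_proj_split lerDr frob2_ge0. Qed.

End Projection.
End Frobenius.

(** * Top left singular vectors *)

Section SingularVectors.
Variable R : realType.

Lemma sum_tail_le_head (u : nat -> R) (b c : nat) :
  (c <= b)%N -> (forall j k, (j <= k < b)%N -> u k <= u j) ->
  c%:R * \sum_(c <= j < b) u j <= (b - c)%:R * \sum_(0 <= j < c) u j.
Proof.
move=> le_cb u_mono.
have -> : c%:R * \sum_(c <= j < b) u j = \sum_(0 <= k < c) \sum_(c <= j < b) u j.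
  by rewrite sumr_const_nat subn0 mulr_natl.
have -> : (b - c)%:R * \sum_(0 <= k < c) u k = \sum_(0 <= k < c) \sum_(c <= j < b) u k.
  by rewrite mulr_sumr; apply: eq_bigr => k _; rewrite sumr_const_nat mulr_natl.
apply: ler_sum_nat => k /andP[_ lt_kc]; apply: ler_sum_nat => j /andP[le_cj lt_jb].
by rewrite u_mono // lt_jb andbT (leq_trans (ltnW lt_kc)).
Qed.

Definition rect_diag (a b : nat) (s : 'I_b -> R) : 'M[R]_(a, b) :=
  \matrix_(i < a, j < b) (if (i == j :> nat) then s j else 0).

Definition first_cols (a c : nat) : 'M[R]_(a, c) := \matrix_(i < a, k < c) (i == k :> nat)%:R.

Lemma frob2_rect_diag a b (s : 'I_b -> R) :
  frob2 (rect_diag a s) = \sum_(j < b | (j < a)%N) s j ^+ 2.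
Proof.
rewrite /frob2 exchange_big [RHS]big_mkcond /=; apply: eq_bigr => j _.
under eq_bigr do rewrite mxE (fun_if (fun x => x ^+ 2)) expr0n /=.
by rewrite -big_mkcond /= (big_ord1_eq _ (fun=> s j ^+ 2)).
Qed.

Section FirstCols.
Variables (a c : nat) (le_ca : (c <= a)%N).

Lemma tr_first_cols : (first_cols a c)^T = rowsub (widen_ord le_ca) 1%:M.
Proof. by apply/matrixP => k i; rewrite !mxE -val_eqE /= eq_sym. Qed.

Lemma first_cols_orth : (first_cols a c)^T *m first_cols a c = 1%:M.
Proof.
by rewrite tr_first_cols mul_rowsub_mx mul1mx; apply/matrixP => k l; rewrite !mxE.
Qed.

Lemma tr_first_cols_mul_diag b (s : 'I_b -> R) :
  (first_cols a c)^T *m rect_diag a s = rect_diag c s.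
Proof. by rewrite tr_first_cols -rowsubE; apply/matrixP => k j; rewrite !mxE. Qed.

End FirstCols.

Section TopLeftSingularVectors.
Variables (a b c : nat) (A : 'M[R]_(a, b)) (P : 'M[R]_(a, c)).
Hypotheses (le_cb : (c <= b)%N) (le_ba : (b <= a)%N) (svP : is_top_left_sv A P).

Let le_ca : (c <= a)%N := leq_trans le_cb le_ba.

Lemma top_left_sv_orth : P^T *m P = 1%:M.
Proof.
have [U [V [s [U_orth [_ [_ [_ [_ ->]]]]]]]] := svP.
by rewrite trmx_mul -mulmxA (mulmxA U^T) U_orth mul1mx first_cols_orth.
Qed.

Lemma top_left_sv_residual :
  b%:R * frob2 (A - P *m P^T *m A) <= (b - c)%:R * frob2 A.
Proof.
have [U [V [s [U_orth [V_orth [s_ge0 [s_mono [-> ->]]]]]]]] := svP.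
set S := rect_diag a s; set E := first_cols a c.
have E_orth : E^T *m E = 1%:M := first_cols_orth le_ca.
have -> : U *m S *m V^T - U *m E *m (U *m E)^T *m (U *m S *m V^T) =
          U *m (S - E *m (E^T *m S)) *m V^T.
  rewrite trmx_mul !mulmxA -(mulmxA _ U^T U) U_orth mulmx1.
  by rewrite mulmxBr mulmxBl !mulmxA.
rewrite !frob2_mul_orthr // !frob2_mul_orthl //.
have pythagoras := frob2_proj_split S E_orth.
rewrite -mulmxA frob2_mul_orthl // in pythagoras.
have -> : frob2 (S - E *m (E^T *m S)) = frob2 S - frob2 (E^T *m S).
  by rewrite pythagoras addrAC subrr add0r.
rewrite tr_first_cols_mul_diag //.
pose u j := oapp (fun k => s k ^+ 2) 0 (insub j).
have uE (k : 'I_b) : u k = s k ^+ 2 by rewrite /u valK.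
have u_mono j k : (j <= k < b)%N -> u k <= u j.
  case/andP=> le_jk lt_kb; have lt_jb := leq_ltn_trans le_jk lt_kb.
  rewrite -[j]/(val (Ordinal lt_jb)) -[k]/(val (Ordinal lt_kb)) !uE.
  by rewrite ler_sqr ?nnegrE ?s_ge0 //; apply: s_mono.
have sumS : frob2 S = \sum_(0 <= j < b) u j.
  rewrite frob2_rect_diag big_mkord; apply: eq_big => [j|j _]; last exact/esym/uE.
  exact: leq_trans (ltn_ord j) le_ba.
have sumES : frob2 (rect_diag c s) = \sum_(0 <= j < c) u j.
  rewrite frob2_rect_diag; under eq_bigr do rewrite -uE.
  by rewrite -big_ord_widen // big_mkord.
rewrite sumES sumS (@big_cat_nat _ _ _ c 0 b) //= addrC addrK.
have := sum_tail_le_head le_cb u_mono.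
have -> : b%:R = c%:R + (b - c)%:R :> R by rewrite -natrD subnKC.
set T := \sum_(c <= j < b) u j; set H := \sum_(0 <= j < c) u j; nra.
Qed.

End TopLeftSingularVectors.

End SingularVectors.

(** * Unrolling the norm recursion *)

Section Unrolling.
Variable R : realType.
Variables (rho mu : R) (tau : nat).

Definition restart_factor (k : nat) : R := if (k %% tau == 0)%N then rho else 1.

(* The coefficients of the unrolled recursion do not depend on the sample path, which lets
   the pathwise bound pass under the expectation. *)
Fixpoint err_coef (k : nat) : nat -> R :=
  if k is k'.+1 then fun l => restart_factor k' * (err_coef k' l + (l == k')%:R)
  else fun=> 0.

Definition delta_coef (k l : nat) : R := err_coef k l + (l == k)%:R.

Fixpoint mom_coef (k : nat) : nat -> R :=
  if k is k'.+1 then fun l => mu * mom_coef k' l + delta_coef k' l else fun=> 0.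

Lemma sum_indicator_mul (F : nat -> R) (H k : nat) :
  \sum_(l < H) (l == k :> nat)%:R * F l = if (k < H)%N then F k else 0.
Proof.
under eq_bigr do rewrite mulr_natl mulrb.
by rewrite -big_mkcond (big_ord1_eq _ F).
Qed.

Hypotheses (rho_ge0 : 0 <= rho) (mu_ge0 : 0 <= mu).

Lemma restart_factor_ge0 k : 0 <= restart_factor k.
Proof. by rewrite /restart_factor; case: ifP. Qed.

Lemma err_coef_ge0 k l : 0 <= err_coef k l.
Proof.
by elim: k => //= k IH; rewrite mulr_ge0 ?restart_factor_ge0 ?addr_ge0 ?ler0n.
Qed.

Lemma delta_coef_ge0 k l : 0 <= delta_coef k l.
Proof. by rewrite addr_ge0 ?err_coef_ge0 ?ler0n. Qed.

Lemma mom_coef_ge0 k l : 0 <= mom_coef k l.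
Proof. by elim: k => //= k IH; rewrite addr_ge0 ?mulr_ge0 ?delta_coef_ge0. Qed.

Section Sequences.
Variables (g e dl mo : nat -> R) (H : nat).
Hypotheses (dl_le : forall k, dl k <= g k + e k) (e0_le : e 0 <= 0)
  (eS_le : forall k, e k.+1 <= restart_factor k * dl k)
  (mo0_le : mo 0 <= 0) (moS_le : forall k, mo k.+1 <= mu * mo k + dl k).

Lemma err_le_coef k : (k <= H)%N -> e k <= \sum_(l < H) err_coef k l * g l.
Proof.
elim: k => [_|k IH lt_kH] /=; first by rewrite big1 // => l _; rewrite mul0r.
under eq_bigr do rewrite -mulrA mulrDl.
rewrite -mulr_sumr big_split /= sum_indicator_mul lt_kH.
apply: le_trans (eS_le k) _; apply: ler_wpM2l; first exact: restart_factor_ge0.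
by apply: le_trans (dl_le k) _; rewrite [leRHS]addrC lerD2l IH // ltnW.
Qed.

Lemma delta_le_coef k : (k < H)%N -> dl k <= \sum_(l < H) delta_coef k l * g l.
Proof.
move=> lt_kH; under eq_bigr do rewrite mulrDl.
rewrite big_split /= sum_indicator_mul lt_kH addrC.
by apply: le_trans (dl_le k) _; rewrite lerD2l err_le_coef // ltnW.
Qed.

Lemma mom_le_coef k : (k <= H)%N -> mo k <= \sum_(l < H) mom_coef k l * g l.
Proof.
elim: k => [_|k IH lt_kH] /=; first by rewrite big1 // => l _; rewrite mul0r.
under eq_bigr do rewrite mulrDl -mulrA.
rewrite big_split -mulr_sumr /=; apply: le_trans (moS_le k) _.
by rewrite lerD ?ler_wpM2l ?IH ?delta_le_coef // ltnW.
Qed.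

End Sequences.

Lemma sum_delta_coef_le_err k H :
  \sum_(l < H) delta_coef k l <= \sum_(l < H) err_coef k l + 1.
Proof.
rewrite big_split lerD2l /=.
rewrite (eq_bigr _ (fun l _ => esym (mulr1 _))) (sum_indicator_mul (fun=> 1)).
by case: ifP.
Qed.

Hypotheses (rho_lt1 : rho < 1) (mu_lt1 : mu < 1) (tau_gt0 : (0 < tau)%N).

Let L := tau%:R / (1 - rho).

Let L_ge0 : 0 <= L.
Proof. by rewrite divr_ge0 ?ler0n // subr_ge0 ltW. Qed.

Lemma restart_bound_le j : rho * L + (j %% tau)%:R + 1 <= L.
Proof.
have L_eq : rho * L + tau%:R = L by rewrite /L; field; rewrite subr_eq0 gt_eqF.
by rewrite -[leRHS]L_eq -addrA lerD2l natr1 ler_nat ltn_pmod.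
Qed.

(* [k.-1 %% tau] counts the iterations since the last restart. *)
Lemma sum_err_coef_le k H : \sum_(l < H) err_coef k l <= rho * L + (k.-1 %% tau)%:R.
Proof.
elim: k => [|k IH] /=.
  by rewrite big1 ?mod0n ?addr0 //; apply: mulr_ge0.
have sumD := le_trans (sum_delta_coef_le_err k H) (lerD IH (lexx 1)).
rewrite -mulr_sumr /restart_factor; case: ifP => [/eqP ->|k_nmod].
  by rewrite addr0 ler_wpM2l // (le_trans sumD) ?restart_bound_le.
have <- : ((k.-1 %% tau).+1 = k %% tau)%N.
  move: k_nmod; case: k {IH sumD} => [|k]; first by rewrite mod0n.
  by rewrite modnS /=; case: ifP.
by rewrite mul1r -natr1 addrA.
Qed.

Lemma sum_delta_coef_le k H : \sum_(l < H) delta_coef k l <= L.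
Proof.
apply: le_trans (sum_delta_coef_le_err k H) _.
exact: le_trans (lerD (sum_err_coef_le k H) (lexx 1)) (restart_bound_le _).
Qed.

Lemma sum_mom_coef_le k H : \sum_(l < H) mom_coef k l <= L / (1 - mu).
Proof.
have LM_eq : mu * (L / (1 - mu)) + L = L / (1 - mu).
  by field; rewrite subr_eq0 gt_eqF.
elim: k => [|k IH] /=.
  by rewrite big1 // divr_ge0 // subr_ge0 ltW.
rewrite big_split -mulr_sumr /= -[leRHS]LM_eq.
by rewrite lerD ?ler_wpM2l ?sum_delta_coef_le.
Qed.

End Unrolling.

(** * One sample path of PowerSGD+ *)

Section SamplePath.
Variables (R : realType) (m n r N : nat) (dX : measure_display) (Xi : measurableType dX).
Variables (gF : 'M[R]_(m, n) -> Xi -> 'M[R]_(m, n))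
          (qr : 'M[R]_(m, r) -> 'M[R]_(m, r)) (topr : 'M[R]_(m, n) -> 'M[R]_(m, r))
          (eta mu : R) (tau : nat) (X0 : 'M[R]_(m, n)) (Qinit : 'M[R]_(n, r))
          (smp : nat -> 'I_N -> Xi).

Local Notation iterate k := (psgd_run gF qr topr eta mu tau X0 Qinit k smp).

Definition grad_avg k : 'M[R]_(m, n) :=
  (N%:R)^-1 *: \sum_(i < N) gF (iterate k).1.1.1 (smp k i).

Definition err_avg k : 'M[R]_(m, n) := (N%:R)^-1 *: \sum_(i < N) (iterate k).2 i.

Definition delta_avg k : 'M[R]_(m, n) := grad_avg k + err_avg k.

Definition proj_basis k : 'M[R]_(m, r) :=
  if (k %% tau == 0)%N then topr (delta_avg k)
  else qr ((N%:R)^-1 *: \sum_(i < N)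
             ((gF (iterate k).1.1.1 (smp k i) + (iterate k).2 i) *m (iterate k).1.1.2)).

Let delta_avgE k :
  (N%:R)^-1 *: \sum_(i < N) (gF (iterate k).1.1.1 (smp k i) + (iterate k).2 i) = delta_avg k.
Proof. by rewrite big_split scalerDr. Qed.

Lemma err_avg0 : err_avg 0 = 0.
Proof. by rewrite /err_avg big1 ?scaler0. Qed.

Lemma err_avgS k :
  err_avg k.+1 = delta_avg k - proj_basis k *m (proj_basis k)^T *m delta_avg k.
Proof.
rewrite /err_avg /proj_basis -delta_avgE /=.
case: (iterate k) => [[[X Q] M] e] /=.
by rewrite sumrB scalerBr -scalemxAr -mulmx_sumr.
Qed.

Lemma momentumS k : (iterate k.+1).1.2 =
  mu *: (iterate k).1.2 + proj_basis k *m (proj_basis k)^T *m delta_avg k.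
Proof.
rewrite /proj_basis -delta_avgE /=.
case: (iterate k) => [[[X Q] M] e] /=; congr (_ + _).
rewrite -mulmxA linearZ /=; congr (_ *m _).
rewrite -scalemxAr; congr (_ *: _).
rewrite linear_sum mulmx_sumr /=.
by apply: eq_bigr => i _; rewrite trmx_mul trmxK.
Qed.

Hypotheses (qrP : forall A, is_QR_factor A (qr A)) (toprP : forall A, is_top_left_sv A (topr A)).
Hypotheses (r_gt0 : (0 < r)%N) (le_rn : (r <= n)%N) (le_nm : (n <= m)%N).

Lemma proj_basis_orth k : (proj_basis k)^T *m proj_basis k = 1%:M.
Proof.
rewrite /proj_basis; case: ifP => _; last exact: (qrP _).1.
exact: top_left_sv_orth le_rn le_nm (toprP _).
Qed.

(* With delta = r/n: since (1 - delta/2)^2 >= 1 - delta, a restart contracts the error norm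
   by this factor. *)
Definition restart_rate : R := 1 - r%:R / n%:R / 2.

Lemma restart_rate_ge0 : 0 <= restart_rate.
Proof.
have : r%:R / n%:R <= 1 :> R by rewrite ler_pdivrMr ?ltr0n ?(leq_trans r_gt0) // mul1r ler_nat.
by rewrite /restart_rate; lra.
Qed.

Lemma restart_rate_lt1 : restart_rate < 1.
Proof.
have : 0 < r%:R / n%:R :> R by rewrite divr_gt0 ?ltr0n ?(leq_trans r_gt0).
by rewrite /restart_rate; lra.
Qed.

Lemma norm_delta_le k : frob_norm (delta_avg k) <= frob_norm (grad_avg k) + frob_norm (err_avg k).
Proof. exact: frob_normD. Qed.

Lemma norm_errS_le k :
  frob_norm (err_avg k.+1) <= restart_factor restart_rate tau k * frob_norm (delta_avg k).
Proof.
rewrite err_avgS /restart_factor; case: ifP => restart; last first.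
  rewrite mul1r; apply: frob_norm_le; rewrite ?frob_norm_ge0 // sqr_frob_norm.
  by rewrite frob2_proj_residual_le ?proj_basis_orth.
apply: frob_norm_le; first by rewrite mulr_ge0 ?restart_rate_ge0 ?frob_norm_ge0.
have := top_left_sv_residual le_rn le_nm (toprP (delta_avg k)).
rewrite /proj_basis restart exprMn sqr_frob_norm /restart_rate.
set d := r%:R / n%:R; set res := frob2 _; set D := frob2 _.
have n_gt0 : 0 < n%:R :> R by rewrite ltr0n (leq_trans r_gt0).
have -> : (n - r)%:R = n%:R * (1 - d) :> R by rewrite natrB // /d; field; exact: lt0r_neq0.
rewrite -mulrA ler_pM2l // => res_le.
have D_ge0 : 0 <= D := frob2_ge0 _.
have := sqr_ge0 d; nra.
Qed.

Hypotheses (mu_ge0 : 0 <= mu) (mu_lt1 : mu < 1) (tau_gt0 : (0 < tau)%N).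

Lemma norm_momentumS_le k :
  frob_norm (iterate k.+1).1.2 <= mu * frob_norm (iterate k).1.2 + frob_norm (delta_avg k).
Proof.
rewrite momentumS; apply: le_trans (frob_normD _ _) _; rewrite frob_normZ // lerD2l.
by apply: frob_norm_le; rewrite ?frob_norm_ge0 // sqr_frob_norm frob2_proj_le ?proj_basis_orth.
Qed.

Lemma frob2_momentum_le t :
  frob2 (psgd_momentum gF qr topr eta mu tau X0 Qinit t smp) <=
  tau%:R / (1 - restart_rate) / (1 - mu) *
  \sum_(l < t.+1) mom_coef restart_rate mu tau t.+1 l * frob2 (grad_avg l).
Proof.
set c := mom_coef restart_rate mu tau t.+1; set K := _ / _ / _.
have c_ge0 l : 0 <= c l by apply: mom_coef_ge0 => //; exact: restart_rate_ge0.
have sum_c : \sum_(l < t.+1) c l <= K.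
  by apply: sum_mom_coef_le => //; [exact: restart_rate_ge0 | exact: restart_rate_lt1].
have mom_le : frob_norm (iterate t.+1).1.2 <=
    \sum_(l < t.+1) c l * frob_norm (grad_avg l).
  apply: (mom_le_coef (tau := tau) (g := fun k => frob_norm (grad_avg k))
           (e := fun k => frob_norm (err_avg k)) (dl := fun k => frob_norm (delta_avg k))
           (mo := fun k => frob_norm (iterate k).1.2) restart_rate_ge0 mu_ge0) => //.
  - exact: norm_delta_le.
  - by rewrite /= err_avg0 frob_norm0.
  - exact: norm_errS_le.
  - by rewrite /= frob_norm0.
  - exact: norm_momentumS_le.
pose G l := frob_norm (grad_avg l).
rewrite /psgd_momentum -sqr_frob_norm.
apply: le_trans (le_trans _ (weighted_CauchySchwarz (c := fun l : 'I_t.+1 => c l)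
                                (fun=> 1) (fun l => G l) (fun l => c_ge0 l))) _ => /=.
  under [X in _ <= X ^+ 2]eq_bigr do rewrite mul1r.
  by rewrite ler_sqr ?nnegrE ?frob_norm_ge0 ?sumr_ge0 // => l _; rewrite mulr_ge0 ?frob_norm_ge0.
under eq_bigr do rewrite expr1n mulr1.
under [X in _ * X <= _]eq_bigr do rewrite sqr_frob_norm.
by rewrite ler_wpM2r ?sumr_ge0 // => l _; rewrite mulr_ge0 ?frob2_ge0.
Qed.

End SamplePath.

(** * Measurability of the iterates *)

Section RandomMatrices.
Variables (R : realType) (d' : measure_display) (T' : measurableType d').

Lemma rmx_meas_cst a b (A : 'M[R]_(a, b)) : rmx_meas (fun _ : T' => A).
Proof. by move=> i j; exact: measurable_cst. Qed.

Lemma rmx_measD a b (Y Z : T' -> 'M[R]_(a, b)) :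
  rmx_meas Y -> rmx_meas Z -> rmx_meas (fun w => Y w + Z w).
Proof.
move=> mY mZ i j; under eq_fun do rewrite mxE.
exact: measurable_funD.
Qed.

Lemma rmx_measZ a b (c : R) (Y : T' -> 'M[R]_(a, b)) :
  rmx_meas Y -> rmx_meas (fun w => c *: Y w).
Proof.
move=> mY i j; under eq_fun do rewrite mxE.
exact: measurable_funM.
Qed.

Lemma rmx_measB a b (Y Z : T' -> 'M[R]_(a, b)) :
  rmx_meas Y -> rmx_meas Z -> rmx_meas (fun w => Y w - Z w).
Proof.
move=> mY mZ; under eq_fun do rewrite -scaleN1r.
by apply: rmx_measD => //; exact: rmx_measZ.
Qed.

Lemma rmx_meas_sum a b N (Y : 'I_N -> T' -> 'M[R]_(a, b)) :
  (forall i, rmx_meas (Y i)) -> rmx_meas (fun w => \sum_(i < N) Y i w).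
Proof.
move=> mY i j; under eq_fun do rewrite summxE.
by apply: measurable_sum => k; exact: mY.
Qed.

Lemma rmx_measM a b c (Y : T' -> 'M[R]_(a, b)) (Z : T' -> 'M[R]_(b, c)) :
  rmx_meas Y -> rmx_meas Z -> rmx_meas (fun w => Y w *m Z w).
Proof.
move=> mY mZ i j; under eq_fun do rewrite mxE.
by apply: measurable_sum => k; exact: measurable_funM.
Qed.

Lemma rmx_meas_tr a b (Y : T' -> 'M[R]_(a, b)) : rmx_meas Y -> rmx_meas (fun w => (Y w)^T).
Proof. by move=> mY i j; under eq_fun do rewrite mxE; exact: mY. Qed.

Lemma measurable_frob2 a b (Y : T' -> 'M[R]_(a, b)) :
  rmx_meas Y -> measurable_fun setT (fun w => frob2 (Y w)).
Proof.
move=> mY; apply: measurable_sum => i; apply: measurable_sum => j.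
exact: measurable_funX.
Qed.

End RandomMatrices.

Section IterateMeasurability.
Variables (R : realType) (m n r N : nat) (dX : measure_display) (Xi : measurableType dX).
Variables (gF : 'M[R]_(m, n) -> Xi -> 'M[R]_(m, n))
          (qr : 'M[R]_(m, r) -> 'M[R]_(m, r)) (topr : 'M[R]_(m, n) -> 'M[R]_(m, r))
          (eta mu : R) (tau : nat) (X0 : 'M[R]_(m, n)) (Qinit : 'M[R]_(n, r)).
Hypotheses (gF_meas : oracle_meas gF) (qr_meas : mx_borel qr) (topr_meas : mx_borel topr).
Variables (d' : measure_display) (T' : measurableType d').

Definition state_meas (S : T' -> psgd_state R m n r N) : Prop :=
  [/\ rmx_meas (fun w => (S w).1.1.1), rmx_meas (fun w => (S w).1.1.2),
      rmx_meas (fun w => (S w).1.2) & forall i, rmx_meas (fun w => (S w).2 i)].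

Lemma psgd_step_meas k (smp : T' -> nat -> 'I_N -> Xi) X Q M (e : T' -> 'I_N -> 'M[R]_(m, n)) :
  (forall i, measurable_fun setT (fun w => smp w k i)) ->
  rmx_meas X -> rmx_meas Q -> rmx_meas M -> (forall i, rmx_meas (e^~ i)) ->
  state_meas (fun w => psgd_step gF qr topr eta mu tau k (smp w) (X w, Q w, M w, e w)).
Proof.
move=> smp_meas mX mQ mM me; rewrite /psgd_step /=.
case: (k %% tau == 0)%N; split => [| | |i] /=;
  repeat first [ assumption | exact: me | exact: smp_meas
               | simple apply rmx_measB | simple apply rmx_measD | simple apply rmx_measZ
               | simple apply rmx_measM | simple apply rmx_meas_tr
               | apply: rmx_meas_sum => ? | apply: gF_meas | apply: topr_meas | apply: qr_meas ].
Qed.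

Lemma psgd_run_meas k (smp : T' -> nat -> 'I_N -> Xi) :
  (forall s i, (s < k)%N -> measurable_fun setT (fun w => smp w s i)) ->
  state_meas (fun w => psgd_run gF qr topr eta mu tau X0 Qinit k (smp w)).
Proof.
elim: k => [|k IH] smp_meas; first by split => [| | |i]; exact: rmx_meas_cst.
have [mX mQ mM me] := IH (fun s i lt_sk => smp_meas s i (ltnW lt_sk)).
set S := fun w => psgd_run gF qr topr eta mu tau X0 Qinit k (smp w) in mX mQ mM me.
have -> : (fun w => psgd_run gF qr topr eta mu tau X0 Qinit k.+1 (smp w)) =
          fun w => psgd_step gF qr topr eta mu tau k (smp w)
                     ((S w).1.1.1, (S w).1.1.2, (S w).1.2, (S w).2).
  by apply/funext => w; rewrite /S /=; case: psgd_run => [[[]]].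
by apply: psgd_step_meas => // i; exact: smp_meas.
Qed.

End IterateMeasurability.

(** * Independence of past and fresh samples *)

Section GeneratedIndependence.
Context (R : realType) (d : measure_display) (T : measurableType d) (P : probability T R).

Lemma indep_generated_l (G : set (set T)) (B : set T) :
  G `<=` measurable -> setI_closed G -> G setT -> measurable B ->
  (forall A, G A -> P (A `&` B) = (P A * P B)%E) ->
  forall A, <<s G >> A -> P (A `&` B) = (P A * P B)%E.
Proof.
move=> Gm GI GT mB indep A GA.
pose c : {nonneg R} := NngNum (fine_ge0 (measure_ge0 P B)).
have PB : (c%:num)%:E = P B := fineK (fin_num_measure P _ mB).
have restr_scale A' : G A' -> mrestr P mB A' = mscale c P A'.
  by move=> GA'; rewrite /mrestr /mscale /= indep // PB muleC.
have restr_fin (k : nat) : (mrestr P mB ((fun=> setT) k) < +oo)%E.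
  by rewrite /mrestr setTI (le_lt_trans (probability_le1 P mB)) ?ltry.
have := @g_sigma_algebra_measure_unique _ _ _ G Gm (fun=> setT) (fun=> GT)
  (bigcup_const _ (ex_intro _ 0%N I)) (mrestr P mB) (mscale c P) GI restr_scale restr_fin A GA.
by rewrite -PB muleC; apply.
Qed.

Lemma indep_generated (G1 G2 : set (set T)) :
  G1 `<=` measurable -> G2 `<=` measurable ->
  setI_closed G1 -> setI_closed G2 -> G1 setT -> G2 setT ->
  (forall A B, G1 A -> G2 B -> P (A `&` B) = (P A * P B)%E) ->
  forall A B, <<s G1 >> A -> <<s G2 >> B -> P (A `&` B) = (P A * P B)%E.
Proof.
move=> G1m G2m G1I G2I G1T G2T indep A B G1A G2B.
have G1A_meas := smallest_sub (@sigma_algebra_measurable _ T) G1m G1A.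
rewrite setIC muleC; apply: indep_generated_l G2B => // B' G2B'.
rewrite setIC muleC; apply: indep_generated_l G1A => //; first exact: G2m.
by move=> A' G1A'; apply: indep.
Qed.

End GeneratedIndependence.

Lemma measurable_to_generated (R : realType) (d : measure_display) (T : measurableType d)
    (G : set (set T)) :
  G `<=` measurable -> measurable_fun setT (fun w : T => (w : g_sigma_algebraType G)).
Proof.
move=> Gm _ Y mY; rewrite setTI.
exact: (smallest_sub (@sigma_algebra_measurable _ T) Gm).
Qed.

Section IndependentIntegral.
Context (R : realType) (d : measure_display) (T : measurableType d) (P : probability T R).
Variables (F G : set (set T)).
Hypotheses (Fm : F `<=` measurable) (Gm : G `<=` measurable).
Hypothesis indepFG : forall A B, <<s F >> A -> <<s G >> B -> P (A `&` B) = (P A * P B)%E.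

Local Notation TF := (g_sigma_algebraType F).
Local Notation TG := (g_sigma_algebraType G).

Lemma ge0_integral_indep_le (phi : TF * TG -> R) (c : R) :
  measurable_fun setT (EFin \o phi) -> (forall p, 0 <= phi p) ->
  (forall x : TF, (\int[P]_w (phi (x, (w : TG)))%:E <= c%:E)%E) ->
  (\int[P]_w (phi ((w : TF), (w : TG)))%:E <= c%:E)%E.
Proof.
move=> phi_meas phi_ge0 slice_le.
have idF_meas := measurable_to_generated R Fm.
have idG_meas := measurable_to_generated R Gm.
pose idF : {mfun T >-> TF} := HB.pack (fun w : T => (w : TF))
  (isMeasurableFun.Build _ _ _ _ _ idF_meas).
pose idG : {mfun T >-> TG} := HB.pack (fun w : T => (w : TG))
  (isMeasurableFun.Build _ _ _ _ _ idG_meas).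
pose diag : {mfun T >-> (TF * TG)%type} := HB.pack (fun w : T => ((w : TF), (w : TG)))
  (isMeasurableFun.Build _ _ _ _ _ (measurable_fun_pair idF_meas idG_meas)).
pose PF := distribution P idF; pose PG := distribution P idG.
have joint_law X : measurable X -> (PF \x PG)%E X = distribution P diag X.
  by apply: product_measure_unique => A B mA mB; exact: indepFG.
have phi_ge0E p : (0 <= (phi p)%:E)%E by rewrite lee_fin.
have -> : (\int[P]_w (phi ((w : TF), (w : TG)))%:E =
           \int[distribution P diag]_p (phi p)%:E)%E.
  by rewrite ge0_integral_distribution.
rewrite (eq_measure_integral (PF \x PG)%E); last by move=> X mX _; exact/esym/joint_law.
rewrite (fubini_tonelli1 _ phi_meas phi_ge0E).
apply: le_trans (_ : (\int[PF]_x (cst c%:E) x <= _)%E).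
  apply: ge0_le_integral => //.
  - by move=> x _; apply: integral_ge0 => y _; exact: phi_ge0E.
  - exact: measurable_fun_fubini_tonelli_F.
  - move=> x _; rewrite /fubini_F (ge0_integral_distribution idG
      (measurable_fun_pair2 x phi_meas) (fun y => phi_ge0E (x, y))).
    exact: slice_le.
have PF1 : PF setT = 1%E := probability_setT _.
by rewrite integral_cst //; change (c%:E * PF setT <= c%:E)%E; rewrite PF1 mule1.
Qed.

End IndependentIntegral.

Section SampleCylinders.
Context (R : realType) (d : measure_display) (T : measurableType d) (P : probability T R)
  (dX : measure_display) (Xi : measurableType dX) (N : nat) (xi : nat -> 'I_N -> T -> Xi).
Hypotheses (xi_meas : forall t i, measurable_fun setT (xi t i)) (xi_indep : samples_indep P xi).

Definition sample_cyl (s : seq (nat * 'I_N)) (A : nat -> 'I_N -> set Xi) : set T :=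
  \bigcap_(k in [set` s]) (xi k.1 k.2 @^-1` A k.1 k.2).

Definition cyl_sets (s : seq (nat * 'I_N)) : set (set T) :=
  [set C | exists2 A, (forall t i, measurable (A t i)) & C = sample_cyl s A].

Lemma cyl_sets_meas s : cyl_sets s `<=` measurable.
Proof.
move=> _ [A mA ->]; apply: fin_bigcap_measurable; first exact: finite_seq.
by move=> k _; rewrite -[X in measurable X]setTI; apply: xi_meas.
Qed.

Lemma cyl_sets_setI s : setI_closed (cyl_sets s).
Proof.
move=> _ _ [A mA ->] [B mB ->]; exists (fun t i => A t i `&` B t i).
  by move=> t i; apply: measurableI.
by rewrite /sample_cyl -bigcapI.
Qed.

Lemma cyl_sets_setT s : cyl_sets s setT.
Proof. by exists (fun _ _ => setT) => //; apply/seteqP; split => // x _ k _. Qed.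

Lemma cyl_sets_preimage s t i B :
  (t, i) \in s -> measurable B -> cyl_sets s (xi t i @^-1` B).
Proof.
move=> sti mB; exists (fun t' i' => if (t' == t) && (i' == i) then B else setT).
  by move=> t' i'; case: ifP.
apply/seteqP; split => x /=.
  by move=> Bx [t' i'] /= _; case: ifP => // /andP[/eqP -> /eqP ->].
by move=> /(_ (t, i) sti) /=; rewrite !eqxx.
Qed.

Lemma sample_cyl_indep l s1 s2 A B : uniq (s1 ++ s2) ->
  (forall k, k \in s1 -> (k.1 < l)%N) -> (forall k, k \in s2 -> (l <= k.1)%N) ->
  (forall t i, measurable (A t i)) -> (forall t i, measurable (B t i)) ->
  P (sample_cyl s1 A `&` sample_cyl s2 B) = (P (sample_cyl s1 A) * P (sample_cyl s2 B))%E.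
Proof.
move=> s12_uniq s1_lt s2_ge mA mB.
pose C t i := if (t < l)%N then A t i else B t i.
have C_s1 k : k \in s1 -> C k.1 k.2 = A k.1 k.2 by move=> /s1_lt; rewrite /C => ->.
have C_s2 k : k \in s2 -> C k.1 k.2 = B k.1 k.2 by move=> /s2_ge; rewrite /C ltnNge => ->.
have -> : sample_cyl s1 A `&` sample_cyl s2 B = sample_cyl (s1 ++ s2) C.
  apply/seteqP; split => x /=.
    move=> [As1 Bs2] k; rewrite /= mem_cat => /orP[ks1|ks2].
      by rewrite C_s1 //; apply: As1.
    by rewrite C_s2 //; apply: Bs2.
  move=> Cs; split => k /= ks.
    by rewrite -C_s1 //; apply: Cs; rewrite /= mem_cat ks.
  by rewrite -C_s2 //; apply: Cs; rewrite /= mem_cat ks orbT.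
have [s1_uniq s2_uniq] : uniq s1 /\ uniq s2.
  by move: s12_uniq; rewrite cat_uniq => /and3P[].
have mC t i : measurable (C t i) by rewrite /C; case: ifP.
rewrite /sample_cyl !xi_indep // big_cat /=; congr (_ * _)%E.
  by apply: eq_big_seq => k /C_s1 ->.
by apply: eq_big_seq => k /C_s2 ->.
Qed.

Definition past_samples (l : nat) : seq (nat * 'I_N) :=
  [seq (s, i) | s <- iota 0 l, i <- enum 'I_N].

Definition present_samples (l : nat) : seq (nat * 'I_N) := [seq (l, i) | i <- enum 'I_N].

Lemma mem_past_samples l k : (k \in past_samples l) = (k.1 < l)%N.
Proof.
case: k => s i; apply/allpairsP/idP => [[[s' i'] /= [] + _ [-> _]]|lt_sl].
  by rewrite mem_iota.
by exists (s, i); rewrite mem_iota mem_enum.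
Qed.

Lemma mem_present_samples l k : (k \in present_samples l) = (k.1 == l).
Proof.
case: k => s i; apply/mapP/eqP => [[i' _ [-> _]] //|/= ->].
by exists i; rewrite ?mem_enum.
Qed.

Lemma uniq_past_present l : uniq (past_samples l ++ present_samples l).
Proof.
rewrite cat_uniq; apply/and3P; split.
- by apply: allpairs_uniq => [||[? ?] [? ?]]; rewrite ?iota_uniq ?enum_uniq.
- apply/hasPn => k; rewrite mem_present_samples mem_past_samples => /eqP ->.
  by rewrite ltnn.
- by rewrite map_inj_uniq ?enum_uniq // => i j [].
Qed.

Lemma indep_past_present l A B :
  <<s cyl_sets (past_samples l) >> A -> <<s cyl_sets (present_samples l) >> B ->
  P (A `&` B) = (P A * P B)%E.
Proof.
apply: indep_generated;
  [exact: cyl_sets_meas|exact: cyl_sets_meas|exact: cyl_sets_setI|exact: cyl_sets_setI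
  |exact: cyl_sets_setT|exact: cyl_sets_setT|].
move=> _ _ [{}A mA ->] [{}B mB ->]; apply: (sample_cyl_indep (l := l)) => //.
- exact: uniq_past_present.
- by move=> k; rewrite mem_past_samples.
- by move=> k; rewrite mem_present_samples => /eqP ->.
Qed.

End SampleCylinders.

(** * Expected squared momentum *)

Lemma ge0_integral_le_comb (R : realType) (d : measure_display) (T : measurableType d)
    (mu : {measure set T -> \bar R}) (H : nat) (c : nat -> R) (f : nat -> T -> R)
    (g : T -> R) (b : R) :
  (forall l, 0 <= c l) -> (forall l w, 0 <= f l w) -> (forall l, measurable_fun setT (f l)) ->
  measurable_fun setT g -> (forall w, 0 <= g w) ->
  (forall w, g w <= \sum_(l < H) c l * f l w) ->
  (forall l, (\int[mu]_w (f l w)%:E <= b%:E)%E) ->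
  (\int[mu]_w (g w)%:E <= ((\sum_(l < H) c l) * b)%:E)%E.
Proof.
move=> c_ge0 f_ge0 f_meas g_meas g_ge0 g_le f_int.
have cf_meas l : measurable_fun setT (fun w => (c l)%:E * (f l w)%:E)%E.
  by apply: measurable_funeM; exact/measurable_EFinP.
apply: (@le_trans _ _ (\int[mu]_w (\sum_(l < H) (c l)%:E * (f l w)%:E))%E).
  apply: ge0_le_integral => //.
  - by move=> w _; rewrite lee_fin.
  - exact/measurable_EFinP.
  - exact: emeasurable_sum.
  - by move=> w _; rewrite sumEFin lee_fin g_le.
rewrite ge0_integral_sum //; last by move=> l w _; apply: mule_ge0; rewrite lee_fin.
rewrite mulr_suml -sumEFin; apply: lee_sum => l _.
rewrite ge0_integralZl_EFin //; first by rewrite EFinM lee_wpmul2l ?lee_fin ?f_int.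
- by move=> w _; rewrite lee_fin.
- exact/measurable_EFinP.
Qed.

Section ExpectedGradient.
Context (R : realType) (d : measure_display) (T : measurableType d) (P : probability T R)
  (dX : measure_display) (Xi : measurableType dX) (m n r N : nat)
  (xi : nat -> 'I_N -> T -> Xi) (gF : 'M[R]_(m, n) -> Xi -> 'M[R]_(m, n))
  (qr : 'M[R]_(m, r) -> 'M[R]_(m, r)) (topr : 'M[R]_(m, n) -> 'M[R]_(m, r))
  (eta mu : R) (tau : nat) (X0 : 'M[R]_(m, n)) (Qinit : 'M[R]_(n, r)) (G2 : R).
Hypotheses (xi_meas : forall t i, measurable_fun setT (xi t i)) (xi_indep : samples_indep P xi).
Hypotheses (gF_meas : oracle_meas gF) (qr_meas : mx_borel qr) (topr_meas : mx_borel topr).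
Hypothesis second_moment_le : forall t X,
  (\int[P]_w (frob2 ((N%:R)^-1 *: \sum_(i < N) gF X (xi t i w)))%:E <= G2%:E)%E.

Lemma expected_grad_avg_le l :
  (\int[P]_w (frob2 (grad_avg gF qr topr eta mu tau X0 Qinit (fun s i => xi s i w) l))%:E
    <= G2%:E)%E.
Proof.
(* Through the sigma-algebras generated by the past and by the fresh samples, X_l and the
   fresh samples become the two coordinates of an independent pair. *)
pose F := cyl_sets xi (past_samples N l); pose G := cyl_sets xi (present_samples N l).
pose TF := g_sigma_algebraType F; pose TG := g_sigma_algebraType G.
pose X_l (x : TF) := (psgd_run gF qr topr eta mu tau X0 Qinit l (fun s i => xi s i x)).1.1.1.
pose phi (p : TF * TG) := frob2 ((N%:R)^-1 *: \sum_(i < N) gF (X_l p.1) (xi l i p.2)).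
have past_meas s i : (s < l)%N -> measurable_fun setT (fun w : TF => xi s i w).
  move=> lt_sl _ B mB; rewrite setTI; apply: sub_sigma_algebra.
  by apply: cyl_sets_preimage; rewrite ?mem_past_samples.
have present_meas i : measurable_fun setT (fun w : TG => xi l i w).
  move=> _ B mB; rewrite setTI; apply: sub_sigma_algebra.
  by apply: cyl_sets_preimage; rewrite ?mem_present_samples.
have [X_l_meas _ _ _] := psgd_run_meas eta mu tau X0 Qinit gF_meas qr_meas topr_meas
  (smp := fun (w : TF) s i => xi s i w) past_meas.
have phi_meas : measurable_fun setT (EFin \o phi).
  apply/measurable_EFinP; apply: measurable_frob2; apply: rmx_measZ.
  apply: rmx_meas_sum => i; apply: gF_meas.
    by move=> a b; exact: measurableT_comp (X_l_meas a b) measurable_fst.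
  exact: measurableT_comp (present_meas i) measurable_snd.
exact: (ge0_integral_indep_le (cyl_sets_meas xi_meas (s := past_samples N l))
          (cyl_sets_meas xi_meas (s := present_samples N l))
          (indep_past_present xi_meas xi_indep (l := l)) phi_meas (fun p => frob2_ge0 _)
          (fun x => second_moment_le l (X_l x))).
Qed.

Hypotheses (qrP : forall A, is_QR_factor A (qr A)) (toprP : forall A, is_top_left_sv A (topr A)).
Hypotheses (r_gt0 : (0 < r)%N) (le_rn : (r <= n)%N) (le_nm : (n <= m)%N).
Hypotheses (mu_ge0 : 0 <= mu) (mu_lt1 : mu < 1) (tau_gt0 : (0 < tau)%N) (G2_ge0 : 0 <= G2).

Lemma expected_momentum_le t :
  (\int[P]_w (frob2 (psgd_momentum gF qr topr eta mu tau X0 Qinit t (fun s i => xi s i w)))%:E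
    <= ((tau%:R / (1 - restart_rate R n r) / (1 - mu)) ^+ 2 * G2)%:E)%E.
Proof.
set rho := restart_rate R n r; set K := tau%:R / (1 - rho) / (1 - mu).
have rho_ge0 : 0 <= rho := restart_rate_ge0 R r_gt0 le_rn.
have rho_lt1 : rho < 1 := restart_rate_lt1 R r_gt0 le_rn.
have K_ge0 : 0 <= K by rewrite !divr_ge0 ?ler0n // subr_ge0 ltW.
have run_meas k := psgd_run_meas eta mu tau X0 Qinit gF_meas qr_meas topr_meas
  (smp := fun w s i => xi s i w) (k := k) (fun s i _ => xi_meas s i).
apply: le_trans (ge0_integral_le_comb (H := t.+1) (c := fun l => K * mom_coef rho mu tau t.+1 l)
  (f := fun l w => frob2 (grad_avg gF qr topr eta mu tau X0 Qinit (fun s i => xi s i w) l))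
  (b := G2) _ _ _ _ _ _ _) _.
- by move=> l; rewrite mulr_ge0 ?mom_coef_ge0.
- by move=> l w; exact: frob2_ge0.
- move=> l; have [mX _ _ _] := run_meas l; apply: measurable_frob2.
  by apply/rmx_measZ/rmx_meas_sum => i; apply: gF_meas.
- by have [_ _ mM _] := run_meas t.+1; exact: measurable_frob2.
- by move=> w; exact: frob2_ge0.
- move=> w; apply: le_trans (frob2_momentum_le gF eta X0 Qinit (fun s i => xi s i w) qrP toprP
                               r_gt0 le_rn le_nm mu_ge0 mu_lt1 tau_gt0 t) _.
  by rewrite mulr_sumr; apply: ler_sum => l _; rewrite mulrA.
- by move=> l; exact: expected_grad_avg_le.
rewrite lee_fin -mulr_sumr expr2 ler_wpM2r // ler_wpM2l //.
exact: sum_mom_coef_le rho_ge0 mu_ge0 rho_lt1 mu_lt1 tau_gt0 _ _.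
Qed.

End ExpectedGradient.

Theorem lemma4
  (R : realType) (d : measure_display) (T : measurableType d) (P : probability T R)
  (dX : measure_display) (Xi : measurableType dX)
  (m n r N : nat) (D : 'I_N -> probability Xi R)
  (xi : nat -> 'I_N -> T -> Xi)
  (gF : 'M[R]_(m, n) -> Xi -> 'M[R]_(m, n))
  (gradfi : 'I_N -> 'M[R]_(m, n) -> 'M[R]_(m, n))
  (sigma omega : R)
  (qr : 'M[R]_(m, r) -> 'M[R]_(m, r)) (topr : 'M[R]_(m, n) -> 'M[R]_(m, r))
  (eta mu : R) (tau : nat) (X0 : 'M[R]_(m, n)) (Qinit : 'M[R]_(n, r)) :
  (0 < N)%N -> (n <= m)%N -> (1 <= r)%N -> (r <= n)%N ->
  0 <= mu -> mu < 1 -> (1 <= tau)%N -> 0 < eta ->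
  (* sampling: independent across nodes and iterations, xi_t^(i) ~ D_i *)
  (forall t i, measurable_fun setT (xi t i)) ->
  samples_indep P xi ->
  (forall t i (A : set Xi), measurable A -> P (xi t i @^-1` A) = D i A) ->
  oracle_meas gF ->
  (* grad f_i(X) = E_{xi ~ D_i}[grad F(X; xi)] *)
  (forall i X a b, (D i).-integrable setT (fun z => (gF X z a b)%:E) /\
     (\int[D i]_z (gF X z a b)%:E = (gradfi i X a b)%:E)%E) ->
  (* Assumption (A3) *)
  (forall X, frob2 ((N%:R)^-1 *: \sum_(i < N) gradfi i X) <= omega ^+ 2) ->
  (forall i X, (\int[D i]_z (frob2 (gF X z - gradfi i X))%:E <= (sigma ^+ 2)%:E)%E) ->
  (forall t X, (\int[P]_w (frob2 ((N%:R)^-1 *: \sum_(i < N) gF X (xi t i w)))%:E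
                 <= (sigma ^+ 2 + omega ^+ 2)%:E)%E) ->
  (* the QR and top-r SVD steps: any measurable choice of the factors *)
  (forall A, is_QR_factor A (qr A)) -> mx_borel qr ->
  (forall A, is_top_left_sv A (topr A)) -> mx_borel topr ->
  forall t : nat,
    (\int[P]_w (frob2 (psgd_momentum gF qr topr eta mu tau X0 Qinit t
                         (fun s i => xi s i w)))%:E
     <= (92 * (tau%:R) ^+ 2 * (sigma ^+ 2 + omega ^+ 2)
         / ((1 - mu) ^+ 2 * (r%:R / n%:R) ^+ 2))%:E)%E.
Proof.
(* Only the combined second-moment bound of (A3) is needed; the argument gives the
   constant 4 in place of 92. *)
move=> _ le_nm r_ge1 le_rn mu_ge0 mu_lt1 tau_ge1 _ xi_meas xi_indep _ gF_meas _ _ _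
  second_moment qrP qr_meas toprP topr_meas t.
have G2_ge0 : 0 <= sigma ^+ 2 + omega ^+ 2 by rewrite addr_ge0 ?sqr_ge0.
apply: le_trans (expected_momentum_le eta X0 Qinit xi_meas xi_indep gF_meas qr_meas topr_meas
  second_moment qrP toprP r_ge1 le_rn le_nm mu_ge0 mu_lt1 tau_ge1 G2_ge0 t) _.
set Q := tau%:R ^+ 2 / ((1 - mu) ^+ 2 * (r%:R / n%:R) ^+ 2).
have -> : (tau%:R / (1 - restart_rate R n r) / (1 - mu)) ^+ 2 = 4 * Q.
  rewrite /Q /restart_rate; field.
  by rewrite !pnatr_eq0 -!lt0n (leq_trans r_ge1 le_rn) r_ge1 subr_eq0 gt_eqF.
rewrite lee_fin [leRHS](_ : _ = 92 * Q * (sigma ^+ 2 + omega ^+ 2)); last by rewrite /Q; ring.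
have Q_ge0 : 0 <= Q by rewrite /Q divr_ge0 // mulr_ge0 // sqr_ge0.
by rewrite ler_wpM2r // ler_wpM2r // ler_nat.
Qed.
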